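(* Let $N\ge3$, $p>p_S$, and let $y^*$ be the unique solution of $y''+\alpha y'-y+y^p-m^2e^{2mt}y=0$ with $y(t)\to1$ as $t\to-\infty$. Then, with $\nu:=\min\{p-1,1\}$, \[ (y^* )'(t)=\frac{m}{2(N-1)-3\theta}e^{2mt}+O\big(e^{2m(1+\nu)t}\big)\quad(t\to-\infty). \]
   Context: $\theta:=\frac{2}{p-1}$, $m:=\{\theta(N-2-\theta)\}^{-1/2}$, $\alpha:=m(N-2-2\theta)$, $p_S:=\frac{N+2}{N-2}$. *)

From Stdlib Require Import Reals.
Open Scope R_scope.

Definition theta (p : R) : R := 2 / (p - 1).
Definition mm (N : nat) (p : R) : R :=
  / sqrt (theta p * (INR N - 2 - theta p)).
Definition alpha (N : nat) (p : R) : R :=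
  mm N p * (INR N - 2 - 2 * theta p).
Definition pS (N : nat) : R := (INR N + 2) / (INR N - 2).

(* Writing y = 1 + z, the equation becomes a damped oscillator
     z'' + a z' + P z = m^2 e^{2mt} (1 + z) - ((1 + z)^p - 1 - p z),
   a = alpha > 0, P = p - 1 > 0.  Its energy E = z'^2 + a z z' + (P + a^2/2) z^2
   satisfies c E + E' <= K F^2 whenever the forcing F is bounded by a small
   multiple of |z| plus B e^{beta t}; so (E - C e^{2 beta t}) e^{ct} is
   nonincreasing, and it cannot be positive because z stays bounded as
   t -> -oo.  Hence bounded solutions decay like their forcing: first
   z, z' = O(e^{2mt}); then, subtracting the particular solution A e^{2mt} of
   z'' + a z' + P z = m^2 e^{2mt}, the remaining forcing is O(e^{4mt}), so
   z' = 2 m A e^{2mt} + O(e^{4mt}) with 2 m A = m / (2(N-1) - 3 theta). *)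

From Stdlib Require Import Reals Lra Psatz.
Open Scope R_scope.

Ltac derive_by_rules :=
  eapply (eq_ind _ (derivable_pt_lim _ _));
  [ repeat first
      [ eassumption | apply derivable_pt_lim_minus | apply derivable_pt_lim_plus
      | apply derivable_pt_lim_mult | apply derivable_pt_lim_const
      | apply derivable_pt_lim_id ]
  | cbv beta; first [ ring | field ] ].

Lemma exp_le_compat x y : x <= y -> exp x <= exp y.
Proof. intros [H | ->]; [apply Rlt_le, exp_increasing |]; lra. Qed.

Lemma Rabs_le_inv x a : Rabs x <= a -> - a <= x <= a.
Proof. unfold Rabs; destruct (Rcase_abs x); lra. Qed.

Lemma Rabs_mult_self x : Rabs x * Rabs x = x * x.
Proof. rewrite <- Rabs_mult. apply Rabs_right, Rle_ge, Rle_0_sqr. Qed.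

Lemma derivable_pt_lim_exp_scal k x :
  derivable_pt_lim (fun t => exp (k * t)) x (k * exp (k * x)).
Proof.
  rewrite Rmult_comm.
  apply (derivable_pt_lim_comp (fun t => k * t) exp).
  - derive_by_rules.
  - apply derivable_pt_lim_exp.
Qed.

Lemma mean_value_abs_le_0 (f f' : R -> R) u M :
  (forall c, Rabs c <= Rabs u -> derivable_pt_lim f c (f' c)) ->
  (forall c, Rabs c <= Rabs u -> Rabs (f' c) <= M) ->
  Rabs (f u - f 0) <= M * Rabs u.
Proof.
  intros Df Bf.
  assert (between : forall c, Rmin 0 u <= c <= Rmax 0 u -> Rabs c <= Rabs u).
  { intros c; unfold Rmin, Rmax, Rabs.
    destruct (Rle_dec 0 u), (Rcase_abs c), (Rcase_abs u); lra. }
  destruct (MVT_abs f f' 0 u) as [c [-> Hc]]; [ now intros; apply Df, between |].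
  rewrite Rminus_0_r. apply Rmult_le_compat_r; [apply Rabs_pos | now apply Bf, between].
Qed.

Definition taylor_rem (p u : R) : R := Rpower (1 + u) p - 1 - p * u.

Lemma Rpower_1_base e : Rpower 1 e = 1.
Proof. unfold Rpower. now rewrite ln_1, Rmult_0_r, exp_0. Qed.

Lemma Rabs_ln_le_1 b : 1/2 <= b <= 3/2 -> Rabs (ln b) <= 1.
Proof.
  intros Hb. pose proof (exp_ineq1 1 ltac:(lra)).
  apply Rabs_le; split; apply Rlt_le.
  - rewrite <- (ln_exp (- (1))). apply ln_increasing; [apply exp_pos |].
    rewrite exp_Ropp. apply Rlt_le_trans with (/ 2); [apply Rinv_lt_contravar |]; lra.
  - rewrite <- (ln_exp 1). apply ln_increasing; lra.
Qed.

Lemma Rpower_le_exp_abs b e : 1/2 <= b <= 3/2 -> Rpower b e <= exp (Rabs e).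
Proof.
  intros Hb. unfold Rpower. apply exp_le_compat.
  pose proof (Rabs_ln_le_1 b Hb). pose proof (Rabs_pos e).
  apply Rle_trans with (Rabs (e * ln b)); [apply Rle_abs |].
  rewrite Rabs_mult. nra.
Qed.

Lemma derivable_pt_lim_Rpower_1_plus e u : 0 < 1 + u ->
  derivable_pt_lim (fun x => Rpower (1 + x) e) u (e * Rpower (1 + u) (e - 1)).
Proof.
  intros Hu. rewrite <- Rmult_1_r.
  apply (derivable_pt_lim_comp (fun x => 1 + x) (fun x => Rpower x e)).
  - derive_by_rules.
  - now apply derivable_pt_lim_power.
Qed.

Lemma Rpower_1_plus_lipschitz e : exists M, 0 <= M /\
  forall u, Rabs u <= 1/2 -> Rabs (Rpower (1 + u) e - 1) <= M * Rabs u.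
Proof.
  exists (Rabs e * exp (Rabs (e - 1))). split.
  { apply Rmult_le_pos; [apply Rabs_pos | apply Rlt_le, exp_pos]. }
  intros u Hu.
  replace (Rpower (1 + u) e - 1) with (Rpower (1 + u) e - Rpower (1 + 0) e)
    by now rewrite Rplus_0_r, Rpower_1_base.
  apply (mean_value_abs_le_0 (fun x => Rpower (1 + x) e)
                             (fun c => e * Rpower (1 + c) (e - 1))).
  - intros c Hc. apply derivable_pt_lim_Rpower_1_plus.
    apply Rabs_le_inv in Hc; lra.
  - intros c Hc. rewrite Rabs_mult. apply Rmult_le_compat_l; [apply Rabs_pos |].
    rewrite Rabs_right by (apply Rle_ge, Rlt_le, exp_pos).
    apply Rpower_le_exp_abs. apply Rabs_le_inv in Hc; lra.
Qed.

Lemma taylor_rem_quadratic p : exists K, 0 <= K /\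
  forall u, Rabs u <= 1/2 -> Rabs (taylor_rem p u) <= K * (u * u).
Proof.
  destruct (Rpower_1_plus_lipschitz (p - 1)) as [M [HM Lip]].
  exists (Rabs p * M). split; [apply Rmult_le_pos; [apply Rabs_pos | lra] |].
  intros u Hu.
  replace (taylor_rem p u) with (taylor_rem p u - taylor_rem p 0)
    by (unfold taylor_rem; rewrite Rplus_0_r, Rpower_1_base; ring).
  rewrite <- Rabs_mult_self, <- Rmult_assoc.
  apply (mean_value_abs_le_0 (taylor_rem p) (fun c => p * (Rpower (1 + c) (p - 1) - 1))).
  - intros c Hc. unfold taylor_rem. apply Rabs_le_inv in Hc.
    pose proof (derivable_pt_lim_Rpower_1_plus p c ltac:(lra)).
    derive_by_rules.
  - intros c Hc. rewrite Rabs_mult, Rmult_assoc.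
    apply Rmult_le_compat_l; [apply Rabs_pos |].
    apply Rle_trans with (M * Rabs c); [apply Lip; lra |].
    apply Rmult_le_compat_l; lra.
Qed.

Definition damped_solution (a P : R) (z w F : R -> R) (T : R) : Prop :=
  forall t, t < T ->
    derivable_pt_lim z t (w t) /\
    derivable_pt_lim w t (- P * z t - a * w t + F t).

Definition energy (a P z w : R) : R :=
  w * w + a * (z * w) + (P + a * a / 2) * (z * z).

Definition decay_rate (a P : R) : R := a * P / (6 * (P + a * a)).
Definition forcing_gain (a P : R) : R := 2 / a + a / (2 * P).
Definition forcing_threshold (a P : R) : R := Rmin 1 (a * P / (8 * forcing_gain a P)).

Lemma energy_lower a P z w : w * w / 2 + P * (z * z) <= energy a P z w.
Proof.
  unfold energy. assert (0 <= (w + a * z) * (w + a * z)) by apply Rle_0_sqr. nra.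
Qed.

Lemma energy_upper a P z w : energy a P z w <= 3/2 * (w * w) + (P + a * a) * (z * z).
Proof.
  unfold energy. assert (0 <= (w - a * z) * (w - a * z)) by apply Rle_0_sqr. nra.
Qed.

Lemma derivable_pt_lim_energy a P z w F T t :
  damped_solution a P z w F T -> t < T ->
  derivable_pt_lim (fun s => energy a P (z s) (w s)) t
    (- a * (w t * w t) - a * P * (z t * z t) + F t * (2 * w t + a * z t)).
Proof.
  intros sol Ht. destruct (sol t Ht) as [Dz Dw]. unfold energy.
  derive_by_rules.
Qed.

Lemma decay_rate_pos a P : 0 < a -> 0 < P -> 0 < decay_rate a P.
Proof. intros. unfold decay_rate. apply Rdiv_lt_0_compat; nra. Qed.

Lemma forcing_gain_pos a P : 0 < a -> 0 < P -> 0 < forcing_gain a P.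
Proof.
  intros. unfold forcing_gain.
  apply Rplus_lt_0_compat; apply Rdiv_lt_0_compat; lra.
Qed.

Lemma forcing_threshold_pos a P : 0 < a -> 0 < P -> 0 < forcing_threshold a P.
Proof.
  intros. pose proof (forcing_gain_pos a P ltac:(lra) ltac:(lra)).
  apply Rmin_pos; [lra | apply Rdiv_lt_0_compat; nra].
Qed.

Lemma energy_dissipation a P eta z w f G :
  0 < a -> 0 < P -> 0 <= eta <= forcing_threshold a P -> 0 <= G ->
  Rabs f <= eta * Rabs z + G ->
  decay_rate a P * energy a P z w
    + (- a * (w * w) - a * P * (z * z) + f * (2 * w + a * z))
  <= 2 * forcing_gain a P * (G * G).
Proof.
  intros Ha HP [Heta0 Heta] HG Hf.
  pose proof (forcing_gain_pos a P Ha HP) as HK.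
  unfold forcing_threshold in Heta.
  pose proof (Rmin_l 1 (a * P / (8 * forcing_gain a P))).
  pose proof (Rmin_r 1 (a * P / (8 * forcing_gain a P))).
  set (K := forcing_gain a P) in *.
  (* Young's inequality on both cross terms *)
  assert (young : f * (2 * w + a * z)
                  <= a / 2 * (w * w) + a * P / 2 * (z * z) + K * (f * f)).
  { assert (squares : 0 <= a / 2 * ((w - 2 / a * f) * (w - 2 / a * f))
                 + a * P / 2 * ((z - f / P) * (z - f / P))).
    { apply Rplus_le_le_0_compat; apply Rmult_le_pos;
        try apply Rle_0_sqr; left; apply Rdiv_lt_0_compat; nra. }
    replace (K * (f * f)) with (2 / a * (f * f) + a / (2 * P) * (f * f))
      by (unfold K, forcing_gain; ring).
    replace (a / 2 * ((w - 2 / a * f) * (w - 2 / a * f))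
             + a * P / 2 * ((z - f / P) * (z - f / P)))
      with (a / 2 * (w * w) + 2 / a * (f * f) + a * P / 2 * (z * z)
            + a / (2 * P) * (f * f) - f * (2 * w + a * z)) in squares
      by (field; lra).
    lra. }
  assert (forcing_sq : f * f <= 2 * (eta * eta) * (z * z) + 2 * (G * G)).
  { assert (Rabs f * Rabs f <= (eta * Rabs z + G) * (eta * Rabs z + G))
      by (apply Rmult_le_compat; auto using Rabs_pos).
    pose proof (Rsqr_abs f). pose proof (Rsqr_abs z). unfold Rsqr in *.
    pose proof (Rle_0_sqr (eta * Rabs z - G)). unfold Rsqr in *. nra. }
  assert (rate : decay_rate a P * energy a P z w <= a / 4 * (w * w) + a * P / 4 * (z * z)).
  { pose proof (energy_upper a P z w).
    assert (HPa : 0 < P + a * a) by nra.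
    apply Rle_trans with (decay_rate a P * (3/2 * (w * w) + (P + a * a) * (z * z))).
    { apply Rmult_le_compat_l; [left; unfold decay_rate; apply Rdiv_lt_0_compat |]; nra. }
    unfold decay_rate.
    replace (a * P / (6 * (P + a * a)) * (3/2 * (w * w) + (P + a * a) * (z * z)))
      with (a / 4 * (w * w) - a * a * a / (4 * (P + a * a)) * (w * w) + a * P / 6 * (z * z))
      by (field; lra).
    assert (0 <= a * a * a / (4 * (P + a * a)) * (w * w)).
    { apply Rmult_le_pos; [| apply Rle_0_sqr].
      left; apply Rdiv_lt_0_compat; [repeat apply Rmult_lt_0_compat |]; lra. }
    nra. }
  assert (small : 2 * K * (eta * eta) <= a * P / 4).
  { assert (K * eta <= a * P / 8).
    { apply Rle_trans with (K * (a * P / (8 * K))); [apply Rmult_le_compat_l; lra |].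
      right. field. lra. }
    assert (0 < a * P) by nra.
    assert (K * eta * eta <= a * P / 8 * eta) by (apply Rmult_le_compat_r; lra).
    nra. }
  assert (0 <= z * z) by apply Rle_0_sqr.
  nra.
Qed.

Lemma nonincreasing_of_derivative_nonpos (f f' : R -> R) T :
  (forall t, t < T -> derivable_pt_lim f t (f' t)) ->
  (forall t, t < T -> f' t <= 0) ->
  forall s t, s <= t -> t < T -> f t <= f s.
Proof.
  intros Df Nf s t [Hst | ->] Ht; [| lra].
  destruct (MVT_cor2 f f' s t Hst) as [c [E Hc]]; [intros; apply Df; lra |].
  assert (f' c <= 0) by (apply Nf; lra).
  assert (f' c * (t - s) <= 0) by nra. lra.
Qed.

Lemma bounded_slope_small_left (z w : R -> R) T Z :
  (forall t, t < T -> derivable_pt_lim z t (w t)) ->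
  (forall t, t < T -> Rabs (z t) <= Z) ->
  forall s eps, s < T -> 0 < eps -> exists xi, xi <= s /\ Rabs (w xi) <= eps.
Proof.
  intros Dz Bz s eps Hs Heps.
  assert (HZ : 0 <= Z) by (pose proof (Bz s Hs); pose proof (Rabs_pos (z s)); lra).
  set (L := (2 * Z + 1) / eps).
  assert (HL : 0 < L) by (apply Rdiv_lt_0_compat; lra).
  destruct (MVT_cor2 z w (s - L) s ltac:(lra)) as [xi [E Hxi]]; [intros; apply Dz; lra |].
  exists xi. split; [lra |].
  assert (Rabs (w xi) * L <= 2 * Z).
  { assert (Hvar : Rabs (z s - z (s - L)) <= 2 * Z).
    { unfold Rminus at 1. eapply Rle_trans; [apply Rabs_triang |].
      rewrite Rabs_Ropp. pose proof (Bz s Hs). pose proof (Bz (s - L) ltac:(lra)). lra. }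
    rewrite E, Rabs_mult, (Rabs_right (s - (s - L))) in Hvar by lra.
    now replace (s - (s - L)) with L in Hvar by ring. }
  apply Rmult_le_reg_r with L; [lra |].
  assert (eps * L = 2 * Z + 1) by (unfold L; field; lra). lra.
Qed.

Lemma nonpos_of_le_exp_left x c M : 0 < c -> 0 < M ->
  (forall s0, exists s, s <= s0 /\ x <= exp (c * s) * M) -> x <= 0.
Proof.
  intros Hc HM Hx. apply Rnot_lt_le. intros Hx0.
  destruct (Hx (ln (x / (2 * M)) / c)) as [s [Hs Hxs]].
  assert (exp (c * s) <= x / (2 * M)).
  { rewrite <- (exp_ln (x / (2 * M))) by (apply Rdiv_lt_0_compat; lra).
    apply exp_le_compat. apply Rmult_le_compat_l with (r := c) in Hs; [| lra].
    replace (c * (ln (x / (2 * M)) / c)) with (ln (x / (2 * M))) in Hs by (field; lra).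
    lra. }
  assert (exp (c * s) * M <= x / 2).
  { apply Rle_trans with (x / (2 * M) * M); [apply Rmult_le_compat_r; lra |].
    right. field. lra. }
  lra.
Qed.

Lemma Rabs_le_sqrt_mul x D y : 0 <= D -> 0 <= y -> x * x <= D * (y * y) ->
  Rabs x <= sqrt D * y.
Proof.
  intros HD Hy H. rewrite <- sqrt_Rsqr_abs. unfold Rsqr.
  rewrite <- (sqrt_square y Hy), <- sqrt_mult by nra.
  apply sqrt_le_1_alt. nra.
Qed.

Section DampedOscillator.

Variables (a P : R) (z w F : R -> R) (T Z B beta eta : R).
Hypotheses (a_pos : 0 < a) (P_pos : 0 < P) (beta_nonneg : 0 <= beta) (B_nonneg : 0 <= B)
  (eta_small : 0 <= eta <= forcing_threshold a P).
Hypothesis sol : damped_solution a P z w F T.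
Hypothesis z_bounded : forall t, t < T -> Rabs (z t) <= Z.
Hypothesis F_bound : forall t, t < T -> Rabs (F t) <= eta * Rabs (z t) + B * exp (beta * t).

Let c := decay_rate a P.
Let E := 2 * forcing_gain a P * (B * B) / (c + 2 * beta).

(* [E] is chosen so that [E (c + 2 beta) = 2 K B^2]: with [energy_dissipation]
   this makes [phi] nonincreasing. *)
Let phi t := exp (c * t) * (energy a P (z t) (w t) - E * exp (2 * beta * t)).

Lemma phi_nonincreasing : forall s t, s <= t -> t < T -> phi t <= phi s.
Proof.
  apply (nonincreasing_of_derivative_nonpos phi (fun t =>
    exp (c * t) * (c * (energy a P (z t) (w t) - E * exp (2 * beta * t))
      + (- a * (w t * w t) - a * P * (z t * z t) + F t * (2 * w t + a * z t))
      - E * (2 * beta * exp (2 * beta * t))))).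
  - intros t Ht. unfold phi.
    pose proof (derivable_pt_lim_energy a P z w F T t sol Ht).
    pose proof (derivable_pt_lim_exp_scal c t).
    pose proof (derivable_pt_lim_exp_scal (2 * beta) t).
    derive_by_rules.
  - intros t Ht.
    pose proof (decay_rate_pos a P a_pos P_pos) as c_pos. fold c in c_pos.
    assert (HG : B * exp (beta * t) * (B * exp (beta * t)) = B * B * exp (2 * beta * t)).
    { replace (2 * beta * t) with (beta * t + beta * t) by ring. rewrite exp_plus. ring. }
    pose proof (energy_dissipation a P eta (z t) (w t) (F t) (B * exp (beta * t))
      a_pos P_pos eta_small ltac:(pose proof (exp_pos (beta * t)); nra) (F_bound t Ht)) as D.
    fold c in D. rewrite HG in D.
    assert (HE : E * (c + 2 * beta) = 2 * forcing_gain a P * (B * B)) by (unfold E; field; lra).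
    pose proof (exp_pos (c * t)).
    enough (c * (energy a P (z t) (w t) - E * exp (2 * beta * t))
      + (- a * (w t * w t) - a * P * (z t * z t) + F t * (2 * w t + a * z t))
      - E * (2 * beta * exp (2 * beta * t)) <= 0) by nra.
    replace (2 * forcing_gain a P * (B * B * exp (2 * beta * t)))
      with (E * (c + 2 * beta) * exp (2 * beta * t)) in D by (rewrite HE; ring).
    lra.
Qed.

Lemma energy_exp_bound : forall t, t < T -> energy a P (z t) (w t) <= E * exp (2 * beta * t).
Proof.
  intros t0 Ht0.
  pose proof (decay_rate_pos a P a_pos P_pos) as c_pos. fold c in c_pos.
  set (M := 3/2 + (P + a * a) * (Z * Z)).
  assert (phi_nonpos : phi t0 <= 0).
  { apply (nonpos_of_le_exp_left _ c M c_pos); [unfold M; nra |].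
    intros s0.
    destruct (bounded_slope_small_left z w T Z (fun t Ht => proj1 (sol t Ht)) z_bounded
                (Rmin t0 s0) 1 ltac:(pose proof (Rmin_l t0 s0); lra) ltac:(lra))
      as [xi [Hxi Hw]].
    pose proof (Rmin_l t0 s0). pose proof (Rmin_r t0 s0).
    exists xi. split; [lra |].
    apply Rle_trans with (phi xi); [apply phi_nonincreasing; lra |].
    unfold phi. apply Rmult_le_compat_l; [apply Rlt_le, exp_pos |].
    assert (0 <= E * exp (2 * beta * xi)).
    { apply Rmult_le_pos; [| apply Rlt_le, exp_pos].
      unfold E. apply Rmult_le_pos; [pose proof (forcing_gain_pos a P a_pos P_pos); nra |].
      apply Rlt_le, Rinv_0_lt_compat. lra. }
    pose proof (energy_upper a P (z xi) (w xi)).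
    assert (w xi * w xi <= 1).
    { pose proof (Rsqr_abs (w xi)). unfold Rsqr in *. pose proof (Rabs_pos (w xi)). nra. }
    assert (z xi * z xi <= Z * Z).
    { pose proof (z_bounded xi ltac:(lra)). pose proof (Rsqr_abs (z xi)).
      unfold Rsqr in *. pose proof (Rabs_pos (z xi)). nra. }
    unfold M. nra. }
  unfold phi in phi_nonpos. pose proof (exp_pos (c * t0)). nra.
Qed.

End DampedOscillator.

Lemma damped_solution_decay a P z w F T Z B beta eta :
  0 < a -> 0 < P -> 0 <= beta -> 0 <= B -> 0 <= eta <= forcing_threshold a P ->
  damped_solution a P z w F T ->
  (forall t, t < T -> Rabs (z t) <= Z) ->
  (forall t, t < T -> Rabs (F t) <= eta * Rabs (z t) + B * exp (beta * t)) ->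
  exists C, 0 <= C /\ forall t, t < T ->
    Rabs (w t) <= C * exp (beta * t) /\ Rabs (z t) <= C * exp (beta * t).
Proof.
  intros Ha HP Hbeta HB Heta sol Bz BF.
  set (E := 2 * forcing_gain a P * (B * B) / (decay_rate a P + 2 * beta)).
  assert (HE : 0 <= E).
  { pose proof (forcing_gain_pos a P Ha HP). pose proof (decay_rate_pos a P Ha HP).
    unfold E. apply Rmult_le_pos; [nra | apply Rlt_le, Rinv_0_lt_compat; lra]. }
  assert (HD : 0 <= (2 + / P) * E).
  { apply Rmult_le_pos; [pose proof (Rinv_0_lt_compat P HP) |]; lra. }
  exists (sqrt ((2 + / P) * E)). split; [apply sqrt_pos |].
  intros t Ht.
  pose proof (energy_exp_bound a P z w F T Z B beta eta Ha HP Hbeta HB Heta sol Bz BF t Ht)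
    as Hen. fold E in Hen.
  replace (exp (2 * beta * t)) with (exp (beta * t) * exp (beta * t)) in Hen
    by (rewrite <- exp_plus; f_equal; ring).
  pose proof (energy_lower a P (z t) (w t)).
  pose proof (exp_pos (beta * t)).
  set (e := exp (beta * t)) in *.
  assert (0 <= E * (e * e)) by (apply Rmult_le_pos; nra).
  assert (Hz : z t * z t <= E * (e * e) / P).
  { apply Rmult_le_reg_l with P; [lra |].
    replace (P * (E * (e * e) / P)) with (E * (e * e)) by (field; lra).
    pose proof (Rle_0_sqr (w t)). unfold Rsqr in *. lra. }
  assert (Hinv : E * (e * e) / P = / P * (E * (e * e))) by (field; lra).
  assert (0 <= / P * (E * (e * e))) by (apply Rmult_le_pos; [apply Rlt_le, Rinv_0_lt_compat |]; lra).
  assert (0 <= P * (z t * z t)) by (apply Rmult_le_pos; [lra | apply Rle_0_sqr]).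
  pose proof (Rle_0_sqr (w t)). unfold Rsqr in *.
  split; apply Rabs_le_sqrt_mul; try lra; rewrite Rmult_assoc, Rmult_plus_distr_r; lra.
Qed.

Lemma damped_solution_minus a P z w F z0 w0 F0 T :
  damped_solution a P z w F T -> damped_solution a P z0 w0 F0 T ->
  damped_solution a P (fun t => z t - z0 t) (fun t => w t - w0 t) (fun t => F t - F0 t) T.
Proof.
  intros sol sol0 t Ht.
  destruct (sol t Ht) as [Dz Dw], (sol0 t Ht) as [Dz0 Dw0].
  split; derive_by_rules.
Qed.

Lemma damped_solution_exp a P A k T :
  damped_solution a P (fun t => A * exp (k * t)) (fun t => k * A * exp (k * t))
    (fun t => (k * k + a * k + P) * A * exp (k * t)) T.
Proof.
  intros t _. pose proof (derivable_pt_lim_exp_scal k t).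
  split; derive_by_rules.
Qed.

(* The amplitude [A] of the particular solution [A e^{2mt}] of [z'' + a z' + P z = m^2 e^{2mt}]. *)
Definition forced_amplitude (a P m : R) : R := m * m / (4 * m * m + 2 * a * m + P).

Section GroundStateExpansion.

Variables (a p m K delta T : R) (z w : R -> R).
Hypotheses (a_pos : 0 < a) (p_gt_1 : 1 < p) (m_pos : 0 < m) (T_nonpos : T <= 0).
Hypotheses (K_nonneg : 0 <= K)
  (taylor_bound : forall u, Rabs u <= 1/2 -> Rabs (taylor_rem p u) <= K * (u * u)).
Hypotheses (delta_nonneg : 0 <= delta) (delta_le_half : delta <= 1/2)
  (K_delta_small : K * delta <= forcing_threshold a (p - 1)).
Hypothesis sol : damped_solution a (p - 1) z w
  (fun t => m * m * exp (2 * m * t) * (1 + z t) - taylor_rem p (z t)) T.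
Hypothesis z_small : forall t, t < T -> Rabs (z t) <= delta.

Lemma deviation_exp_decay : exists E, 0 <= E /\ forall t, t < T -> Rabs (z t) <= E * exp (2 * m * t).
Proof.
  destruct (damped_solution_decay a (p - 1) z w _ T delta (m * m * 2) (2 * m) (K * delta)
    a_pos ltac:(lra) ltac:(lra) ltac:(nra) ltac:(split; [nra | lra]) sol z_small)
    as [E [HE B]].
  - intros t Ht. pose proof (z_small t Ht) as Hz. pose proof (exp_pos (2 * m * t)).
    pose proof (taylor_bound (z t) ltac:(lra)). pose proof (Rabs_pos (z t)).
    assert (K * (z t * z t) <= K * delta * Rabs (z t)).
    { rewrite <- Rabs_mult_self, Rmult_assoc.
      apply Rmult_le_compat_l; [| apply Rmult_le_compat_r]; lra. }
    assert (Rabs (m * m * exp (2 * m * t) * (1 + z t)) <= m * m * 2 * exp (2 * m * t)).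
    { assert (0 <= m * m * exp (2 * m * t)) by (apply Rmult_le_pos; nra).
      rewrite Rabs_mult, (Rabs_right (m * m * exp (2 * m * t))) by lra.
      apply Rabs_le_inv in Hz.
      assert (Rabs (1 + z t) <= 2) by (apply Rabs_le; lra). nra. }
    unfold Rminus. eapply Rle_trans; [apply Rabs_triang |]. rewrite Rabs_Ropp. lra.
  - exists E. split; [exact HE | intros t Ht; apply B, Ht].
Qed.

Lemma slope_expansion : exists C, 0 <= C /\ forall t, t < T ->
  Rabs (w t - 2 * m * forced_amplitude a (p - 1) m * exp (2 * m * t)) <= C * exp (4 * m * t).
Proof.
  destruct deviation_exp_decay as [E [HE Bz]].
  set (A := forced_amplitude a (p - 1) m).
  assert (HA : 0 < A) by (unfold A, forced_amplitude; apply Rdiv_lt_0_compat; nra).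
  assert (resonance : (2 * m * (2 * m) + a * (2 * m) + (p - 1)) * A = m * m)
    by (unfold A, forced_amplitude; field; nra).
  pose proof (damped_solution_minus _ _ _ _ _ _ _ _ _ sol (damped_solution_exp a (p - 1) A (2 * m) T))
    as sol_rest.
  cbv beta in sol_rest.
  destruct (damped_solution_decay a (p - 1) _ _ _ T (delta + A) (K * (E * E) + m * m * E) (4 * m) 0
    a_pos ltac:(lra) ltac:(lra) ltac:(nra)
    ltac:(pose proof (forcing_threshold_pos a (p - 1) a_pos ltac:(lra)); lra) sol_rest)
    as [C [HC Bw]].
  - intros t Ht. pose proof (z_small t Ht). pose proof (exp_pos (2 * m * t)).
    assert (exp (2 * m * t) <= 1) by (rewrite <- exp_0; apply exp_le_compat; nra).
    cbv beta. unfold Rminus at 1. eapply Rle_trans; [apply Rabs_triang |].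
    rewrite Rabs_Ropp, (Rabs_right (A * _)) by (apply Rle_ge, Rmult_le_pos; lra). nra.
  - intros t Ht. pose proof (Bz t Ht). pose proof (Rabs_pos (z t)).
    pose proof (exp_pos (2 * m * t)). pose proof (taylor_bound (z t) ltac:(pose proof (z_small t Ht); lra)).
    cbv beta. replace (4 * m * t) with (2 * m * t + 2 * m * t) by ring. rewrite exp_plus.
    set (e := exp (2 * m * t)) in *.
    replace (m * m * e * (1 + z t) - taylor_rem p (z t) - (2 * m * (2 * m) + a * (2 * m) + (p - 1)) * A * e)
      with (m * m * e * z t - taylor_rem p (z t)) by (rewrite <- resonance; ring).
    assert (K * (z t * z t) <= K * (E * E) * (e * e)).
    { rewrite <- Rabs_mult_self. replace (K * (E * E) * (e * e)) with (K * ((E * e) * (E * e))) by ring.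
      apply Rmult_le_compat_l; [lra | apply Rmult_le_compat; lra]. }
    assert (Rabs (m * m * e * z t) <= m * m * E * (e * e)).
    { rewrite Rabs_mult, Rabs_right by (apply Rle_ge, Rmult_le_pos; nra).
      replace (m * m * E * (e * e)) with (m * m * e * (E * e)) by ring.
      apply Rmult_le_compat_l; [apply Rmult_le_pos |]; nra. }
    unfold Rminus. eapply Rle_trans; [apply Rabs_triang |]. rewrite Rabs_Ropp. lra.
  - exists C. split; [exact HC | intros t Ht; apply Bw, Ht].
Qed.

End GroundStateExpansion.

Lemma ode_damped_solution a m p (y y1 y2 : R -> R) T :
  (forall t, t < T ->
     derivable_pt_lim y t (y1 t) /\ derivable_pt_lim y1 t (y2 t) /\
     y2 t + a * y1 t - y t + Rpower (y t) p - m ^ 2 * exp (2 * m * t) * y t = 0) ->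
  damped_solution a (p - 1) (fun t => y t - 1) y1
    (fun t => m * m * exp (2 * m * t) * (1 + (y t - 1)) - taylor_rem p (y t - 1)) T.
Proof.
  intros ode t Ht. destruct (ode t Ht) as (Dy & Dy1 & Eq).
  split; [derive_by_rules |].
  unfold taylor_rem. replace (1 + (y t - 1)) with (y t) by ring.
  eapply (eq_ind _ (derivable_pt_lim _ _)); [exact Dy1 | lra].
Qed.

Lemma supercritical_parameters N p : (3 <= N)%nat -> pS N < p ->
  1 < p /\ 0 < mm N p /\ 0 < alpha N p /\
  mm N p / (2 * (INR N - 1) - 3 * theta p)
    = 2 * mm N p * forced_amplitude (alpha N p) (p - 1) (mm N p).
Proof.
  intros HN Hp.
  assert (Hn : 3 <= INR N) by (replace 3 with (INR 3) by (simpl; ring); apply le_INR, HN).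
  unfold pS in Hp.
  assert (HP : 4 < (p - 1) * (INR N - 2)).
  { apply Rmult_lt_compat_r with (r := INR N - 2) in Hp; [| lra].
    unfold Rdiv in Hp. rewrite Rmult_assoc, Rinv_l in Hp by lra. lra. }
  assert (Hp1 : 1 < p) by nra.
  assert (Hth : theta p * (p - 1) = 2) by (unfold theta; field; lra).
  assert (Hth0 : 0 < theta p) by (unfold theta; apply Rdiv_lt_0_compat; lra).
  assert (Hth1 : 2 * theta p < INR N - 2) by nra.
  assert (Hq : 0 < theta p * (INR N - 2 - theta p)) by nra.
  assert (Hm : 0 < mm N p) by (apply Rinv_0_lt_compat, sqrt_lt_R0, Hq).
  assert (Hmm : mm N p * mm N p * (theta p * (INR N - 2 - theta p)) = 1).
  { unfold mm. rewrite <- Rinv_mult, sqrt_sqrt by lra. field. lra. }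
  assert (Ha : 0 < alpha N p) by (apply Rmult_lt_0_compat; lra).
  split; [exact Hp1 | split; [exact Hm | split; [exact Ha |]]].
  assert (HPm : p - 1 = 2 * (mm N p * mm N p) * (INR N - 2 - theta p)).
  { transitivity ((p - 1) * (mm N p * mm N p * (theta p * (INR N - 2 - theta p))));
      [rewrite Hmm; ring |].
    replace ((p - 1) * (mm N p * mm N p * (theta p * (INR N - 2 - theta p))))
      with (theta p * (p - 1) * (mm N p * mm N p) * (INR N - 2 - theta p)) by ring.
    rewrite Hth. ring. }
  unfold forced_amplitude, alpha. rewrite HPm. field. split; apply Rgt_not_eq; nra.
Qed.

Lemma small_radius_exists K eta : 0 <= K -> 0 < eta ->
  exists delta, 0 < delta /\ delta <= 1/2 /\ K * delta <= eta.
Proof.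
  intros HK Heta. exists (Rmin (1/2) (eta / (K + 1))).
  assert (0 < eta / (K + 1)) by (apply Rdiv_lt_0_compat; lra).
  pose proof (Rmin_l (1/2) (eta / (K + 1))). pose proof (Rmin_r (1/2) (eta / (K + 1))).
  split; [apply Rmin_pos; lra | split; [lra |]].
  apply Rle_trans with ((K + 1) * (eta / (K + 1))); [nra | right; field; lra].
Qed.

Lemma exp_scal_le_of_nonpos k l t : l <= k -> t <= 0 -> exp (k * t) <= exp (l * t).
Proof. intros. apply exp_le_compat. nra. Qed.

Theorem lemma4p5 (N : nat) (p : R) (y y1 y2 : R -> R) :
  (3 <= N)%nat ->
  pS N < p ->
  (exists T : R, forall t : R, t < T ->
     0 < y t /\
     derivable_pt_lim y t (y1 t) /\
     derivable_pt_lim y1 t (y2 t) /\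
     y2 t + alpha N p * y1 t - y t + Rpower (y t) p
       - (mm N p) ^ 2 * exp (2 * mm N p * t) * y t = 0) ->
  (forall eps : R, 0 < eps -> exists M : R, forall t : R, t < M ->
     Rabs (y t - 1) < eps) ->
  exists C T' : R, forall t : R, t < T' ->
    Rabs (y1 t - mm N p / (2 * (INR N - 1) - 3 * theta p)
                   * exp (2 * mm N p * t))
      <= C * exp (2 * mm N p * (1 + Rmin (p - 1) 1) * t).
Proof.
  intros HN Hp [T0 ode] y_to_1.
  destruct (supercritical_parameters N p HN Hp) as (Hp1 & Hm & Ha & ->).
  destruct (taylor_rem_quadratic p) as [K [HK taylor_bound]].
  destruct (small_radius_exists K (forcing_threshold (alpha N p) (p - 1)) HK
              (forcing_threshold_pos (alpha N p) (p - 1) Ha ltac:(lra)))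
    as (delta & Hdelta & Hdelta_half & K_delta_small).
  destruct (y_to_1 delta Hdelta) as [M HM].
  set (T1 := Rmin (Rmin T0 M) 0).
  assert (HT1 : forall t, t < T1 -> t < T0 /\ t < M).
  { intros t Ht. pose proof (Rmin_l (Rmin T0 M) 0).
    pose proof (Rmin_l T0 M). pose proof (Rmin_r T0 M). unfold T1 in Ht. lra. }
  destruct (slope_expansion (alpha N p) p (mm N p) K delta T1 (fun t => y t - 1) y1
    Ha Hp1 Hm (Rmin_r _ _) HK taylor_bound (Rlt_le _ _ Hdelta) Hdelta_half K_delta_small)
    as [C [HC expansion]].
  - apply (ode_damped_solution _ _ _ y y1 y2). intros t Ht.
    now destruct (ode t (proj1 (HT1 t Ht))) as (_ & Hsol).
  - intros t Ht. apply Rlt_le, HM, HT1, Ht.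
  - exists C, T1. intros t Ht. eapply Rle_trans; [apply expansion, Ht |].
    apply Rmult_le_compat_l; [exact HC |].
    pose proof (Rmin_r (p - 1) 1). pose proof (Rmin_r (Rmin T0 M) 0).
    apply exp_scal_le_of_nonpos; [| unfold T1 in Ht; lra].
    assert (0 <= mm N p * (1 - Rmin (p - 1) 1)) by (apply Rmult_le_pos; lra). lra.
Qed.
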